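(* Let $1\le t\le n$. The minimal prime ideals of $I_t(L_n)$ are exactly the ideals $\mathfrak p_F=(x_i: i\in F)$ with $F\in C_{n,t}$, where $C_{n,t}$ is the set of subsets $F=\{i_1,\ldots,i_r\}\subseteq[n]$, $i_1<\cdots<i_r$, satisfying: (1) $1\le i_1\le t$; (2) $i_2>t$; (3) $1\le i_{j+1}-i_j\le t$ for $j=1,\ldots,r-1$; (4) $i_{j+2}-i_j>t$ for $j=1,\ldots,r-2$; (5) $i_{r-1}<n-t+1$; (6) $n-t+1\le i_r\le n$ (conditions referring to indices not in $\{1,\ldots,r\}$ are vacuous). Equivalently, $C_{n,t}$ is the set of minimal vertex covers of $\Delta_{n,t}$.
   Context: $K$ is a field, $S=K[x_1,\ldots,x_n]$, $I_t(L_n)=(u_1,\ldots,u_{n-t+1})$ with $u_i=x_ix_{i+1}\cdots x_{i+t-1}$. $\Delta_{n,t}$ is the simplicial complex on $[n]$ with facets $\{i,\ldots,i+t-1\}$, $i=1,\ldots,n-t+1$; a vertex cover is a subset of $[n]$ meeting every facet, minimal if no proper subset is a vertex cover. *)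

From HB Require Import structures.
From mathcomp Require Import all_boot all_order all_algebra.
From mathcomp Require Import mpoly.
Set Implicit Arguments. Unset Strict Implicit. Unset Printing Implicit Defensive.
Import GRing.Theory.
Local Open Scope ring_scope.

Section Ideals.
Variable R : comNzRingType.

Definition is_ideal (I : R -> Prop) : Prop :=
  [/\ I 0, (forall a b, I a -> I b -> I (a + b)) & (forall r a, I a -> I (r * a))].

Definition is_prime_ideal (P : R -> Prop) : Prop :=
  [/\ is_ideal P, ~ P 1 & (forall a b, P (a * b) -> P a \/ P b)].

Definition ideal_gen (G : R -> Prop) : R -> Prop :=
  fun p => exists s : seq (R * R),
    (forall c, c \in s -> G c.2) /\ p = \sum_(c <- s) c.1 * c.2.

Definition subideal (I J : R -> Prop) : Prop := forall x, I x -> J x.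

Definition minimal_prime_of (I P : R -> Prop) : Prop :=
  [/\ is_prime_ideal P, subideal I P &
      forall Q, is_prime_ideal Q -> subideal I Q -> subideal Q P -> subideal P Q].
End Ideals.

(* Variables are indexed 0-based by 'I_n: 'X_i (i : 'I_n) stands for x_{i+1}. *)

(* u_{i+1} = x_{i+1} x_{i+2} ... x_{i+t}, for 0 <= i <= n - t (0-based i). *)
Definition path_gen (K : fieldType) (n t i : nat) : {mpoly K[n]} :=
  \prod_(j < n | (i <= j < i + t)%N) 'X_j.

Definition It_Ln (K : fieldType) (n t : nat) : {mpoly K[n]} -> Prop :=
  ideal_gen (fun g => exists i : nat, (i + t <= n)%N /\ g = path_gen K n t i).

Definition pF (K : fieldType) (n : nat) (F : {set 'I_n}) : {mpoly K[n]} -> Prop :=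
  ideal_gen (fun g => exists2 i : 'I_n, i \in F & g = 'X_i).

Definition idx_seq (n : nat) (F : {set 'I_n}) : seq nat :=
  sort leq [seq (val i).+1 | i in F].

(* C_{n,t}; with s = idx_seq F, i_{j+1} = s`_j (0-based list position). *)
Definition in_C (n t : nat) (F : {set 'I_n}) : Prop :=
  let s := idx_seq F in
  let r := size s in
  let i := fun j => nth 0%N s j in
  (0 < r)%N /\
  (1 <= i 0 <= t)%N /\
  ((1 < r)%N -> (t < i 1)%N) /\
  (forall j, (j.+1 < r)%N -> (i j < i j.+1)%N /\ (1 <= i j.+1 - i j <= t)%N) /\
  (forall j, (j.+2 < r)%N -> (t < i j.+2 - i j)%N) /\
  ((1 < r)%N -> (i (r.-2) < n - t + 1)%N) /\
  (n - t + 1 <= i (r.-1) <= n)%N.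

(* Delta_{n,t}: facets {i,...,i+t-1}; 0-based facet with start i, i + t <= n. *)
Definition facet (n t i : nat) : {set 'I_n} := [set j : 'I_n | (i <= j < i + t)%N].

Definition vertex_cover (n t : nat) (F : {set 'I_n}) : Prop :=
  forall i : nat, (i + t <= n)%N -> F :&: facet n t i != set0.

Definition minimal_vertex_cover (n t : nat) (F : {set 'I_n}) : Prop :=
  vertex_cover t F /\ (forall G : {set 'I_n}, G \proper F -> ~ vertex_cover t G).

(* Sort F as i_1 < ... < i_r and pad it with i_0 = 0 and i_(r+1) = n + 1.
   F meets every facet {i+1, ..., i+t} iff every gap i_(k+1) - i_k is at most t,
   and i_k is irredundant iff some facet contains i_k alone, i.e. iff
   i_(k+1) - i_(k-1) > t; conditions (1)-(6) are exactly these two gap conditions.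
   On the algebraic side, p_F is the kernel of the substitution x_i := 0 (i in F),
   hence prime, and a prime containing I_t(L_n) contains a variable of every
   generator u_i, hence contains p_F for some minimal vertex cover F. *)

From HB Require Import structures.
From mathcomp Require Import all_boot all_order all_algebra.
From mathcomp Require Import mpoly.
From mathcomp Require Import zify.
From Stdlib Require Import Classical ClassicalEpsilon FunctionalExtensionality PropExtensionality.
Set Implicit Arguments. Unset Strict Implicit. Unset Printing Implicit Defensive.

Lemma exists_bracket (f : nat -> nat) i N : f 0 <= i -> i < f N ->
  exists2 k, k < N & f k <= i < f k.+1.
Proof.
elim: N => [|N IH] f0i ifN; first lia.
have [fNi|ifN'] := leqP (f N) i; first by exists N => //; apply/andP.
by have [k kN fk] := IH f0i ifN'; exists k => //; lia.
Qed.

Section PaddedSequence.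
Variables (e : nat -> nat) (r n t : nat).
Hypotheses (e0 : e 0 = 0) (e_last : e r.+1 = n.+1)
  (e_incr : forall a b, a < b -> b <= r.+1 -> e a < e b).

(* The facet with 0-based start [i] is [{i+1, ..., i+t}] in the 1-based
   coordinates carried by [e]. *)
Definition hits i k := i < e k.+1 <= i + t.

Definition short_gaps := forall k, k <= r -> e k.+1 <= e k + t.

Definition long_double_gaps := forall k, k < r -> e k + t < e k.+2.

Lemma e_ltn_rev a b : a <= r.+1 -> b <= r.+1 -> e a < e b -> a < b.
Proof.
move=> ar br eab; case: (ltngtP a b) => // [ba|ab]; last by move: eab; rewrite ab ltnn.
by have := e_incr ba ar; lia.
Qed.

Lemma e_le_last k : k <= r.+1 -> e k <= n.+1.
Proof.
rewrite -e_last leq_eqVlt => /orP [/eqP -> //|kr].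
exact: ltnW (e_incr kr _).
Qed.

Lemma short_gapsE :
  short_gaps <-> forall i, i + t <= n -> exists2 k, k < r & hits i k.
Proof.
split=> [gaps i it | cover k kr].
  have [k kr /andP [eki iek]] : exists2 k, k < r.+1 & e k <= i < e k.+1.
    by apply: exists_bracket; rewrite ?e0 ?e_last //; lia.
  have := gaps k; rewrite -ltnS => /(_ kr) gk.
  exists k; last by rewrite /hits; apply/andP; lia.
  case: (ltnP k r) => // rk; have Ekr : k = r by lia.
  by move: gk eki; rewrite Ekr e_last; lia.
rewrite leqNgt; apply/negP => gap.
have [|m mr /andP [m1 m2]] := cover (e k); first by have := @e_le_last k.+1 kr; lia.
have := @e_ltn_rev k m.+1 (leqW kr) (leqW mr) m1; have := @e_ltn_rev m.+1 k.+1 (leqW mr) kr.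
lia.
Qed.

Lemma long_double_gapE k : 0 < t -> k < r ->
  (exists i, [/\ i + t <= n, hits i k & forall m, m < r -> hits i m -> m = k])
  <-> e k + t < e k.+2.
Proof.
move=> t_gt0 kr; split.
  move=> [i [it /andP [i1 i2] uniq_k]].
  have eki : e k <= i.
    case: k kr i1 i2 uniq_k => [|k] kr i1 i2 uniq_k; first by rewrite e0.
    rewrite leqNgt; apply/negP => ik.
    have := uniq_k k (ltnW kr); rewrite /hits; have := e_incr (ltnSn k.+1) (ltnW kr); lia.
  suff : i + t < e k.+2 by lia.
  have [kr1|rk1] := ltnP k.+1 r; last first.
    have Ek : k.+2 = r.+1 by lia.
    by rewrite Ek e_last; lia.
  rewrite ltnNge; apply/negP => ik.
  have := uniq_k k.+1 kr1; rewrite /hits; have := e_incr (ltnSn k.+1) kr; lia.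
move=> gap.
have e1 := e_incr (ltnSn k) (ltnW kr).
have e2 := e_incr (ltnSn k.+1) kr.
have e3 := @e_le_last k.+2 kr.
exists (maxn (e k) (e k.+1 - t)); split; [lia | by rewrite /hits; apply/andP; lia |].
move=> m mr /andP [m1 m2].
have := @e_ltn_rev k m.+1 (leqW (ltnW kr)) (leqW mr).
have := @e_ltn_rev m.+1 k.+2 (leqW mr) kr.
lia.
Qed.

End PaddedSequence.

Section VertexCovers.
Variables (n t : nat).

Lemma vertex_cover_subset (G H : {set 'I_n}) :
  G \subset H -> vertex_cover t G -> vertex_cover t H.
Proof.
move=> GH covG i it; have /set0Pn [j] := covG i it; rewrite inE => /andP [jG jf].
by apply/set0Pn; exists j; rewrite inE (subsetP GH _ jG).
Qed.

Lemma minimal_vertex_coverD1 (F : {set 'I_n}) : minimal_vertex_cover t F <->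
  vertex_cover t F /\ (forall j, j \in F -> ~ vertex_cover t (F :\ j)).
Proof.
split=> [[covF minF] | [covF minF]].
  by split=> // j jF; apply/minF/properD1.
split=> // G /properP [GF [j jF jG]] covG.
by apply: (minF j jF); apply: vertex_cover_subset covG; rewrite subsetD1 GF jG.
Qed.

Lemma exists_minimal_subcover (G : {set 'I_n}) : vertex_cover t G ->
  exists2 F : {set 'I_n}, F \subset G & minimal_vertex_cover t F.
Proof.
pose cover : pred {set 'I_n} := fun H => excluded_middle_informative (vertex_cover t H).
move=> covG; have coverG : cover G by apply/sumboolP.
have [F /minsetP [/sumboolP covF minF] FG] := minset_exists coverG.
exists F => //; split=> // H HF covH; have {}covH : cover H by apply/sumboolP.
by move: (HF); rewrite (minF H covH (proper_sub HF)) properxx.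
Qed.

End VertexCovers.

Section SortedCover.
Variables (n t : nat) (F : {set 'I_n}).

Let s := idx_seq F.
Let r := size s.
Let e j := nth 0 (0 :: rcons s n.+1) j.

Lemma mem_idx_seq x : x \in s <-> exists2 j : 'I_n, j \in F & x = j.+1.
Proof.
rewrite /s /idx_seq mem_sort; split=> [/mapP [j] | [j jF ->]].
  by rewrite mem_enum => jF ->; exists j.
by apply/mapP; exists j; rewrite ?mem_enum.
Qed.

Lemma idx_seq_sorted : sorted ltn s.
Proof.
rewrite ltn_sorted_uniq_leq sort_uniq sort_sorted ?andbT; last exact: leq_total.
by rewrite map_inj_uniq ?enum_uniq // => i j [] /val_inj.
Qed.

Lemma padded_sorted : sorted ltn (0 :: rcons s n.+1).
Proof.
have s_range x : x \in s -> 0 < x <= n by move=> /mem_idx_seq [j _ ->]; rewrite /= ltn_ord.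
rewrite /= rcons_path; apply/andP; split.
  case: (s) s_range idx_seq_sorted => [|x s'] //= s_range ->.
  by rewrite andbT; case/andP: (s_range x (mem_head x s')).
have := mem_last 0 s; rewrite inE => /orP [/eqP -> //|/s_range /andP [_]]; exact.
Qed.

Lemma e_last : e r.+1 = n.+1.
Proof. by rewrite /e /= nth_rcons ltnn eqxx. Qed.

Lemma e_incr a b : a < b -> b <= r.+1 -> e a < e b.
Proof.
move=> ab br; apply: (sorted_ltn_nth ltn_trans 0 padded_sorted) => //;
  rewrite inE /= size_rcons; lia.
Qed.

Lemma nth_idx_seq j : j < r -> nth 0 s j = e j.+1.
Proof. by move=> jr; rewrite /e /= nth_rcons jr. Qed.

Lemma e_in_F k : k < r -> exists2 j : 'I_n, j \in F & e k.+1 = j.+1.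
Proof. by move=> kr; rewrite -nth_idx_seq //; apply/mem_idx_seq/mem_nth. Qed.

Lemma F_in_e (j : 'I_n) : j \in F -> exists2 k, k < r & e k.+1 = j.+1.
Proof.
move=> jF; have js : j.+1 \in s by apply/mem_idx_seq; exists j.
by exists (index j.+1 s); rewrite ?index_mem // -nth_idx_seq ?index_mem // nth_index.
Qed.

Lemma e_inj a b : a <= r.+1 -> b <= r.+1 -> e a = e b -> a = b.
Proof.
move=> ar br eab; case: (ltngtP a b) => // ab.
  by have := e_incr ab br; lia.
by have := e_incr ab ar; lia.
Qed.

Lemma vertex_cover_hitsE : vertex_cover t F <->
  forall i, i + t <= n -> exists2 k, k < r & hits e t i k.
Proof.
split=> [covF i it | hitF i it].
  have /set0Pn [j] := covF i it; rewrite !inE => /andP [jF ij].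
  by have [k kr ekj] := F_in_e jF; exists k; rewrite // /hits ekj.
have [k kr] := hitF i it; have [j jF ekj] := e_in_F kr.
by rewrite /hits ekj => ij; apply/set0Pn; exists j; rewrite !inE jF.
Qed.

Lemma not_vertex_coverD1E (j : 'I_n) k :
  vertex_cover t F -> k < r -> e k.+1 = j.+1 -> j \in F ->
  ~ vertex_cover t (F :\ j) <->
  exists i, [/\ i + t <= n, hits e t i k & forall m, m < r -> hits e t i m -> m = k].
Proof.
move=> covF kr ekj jF; split.
  move=> /not_all_ex_not [i] /(@imply_to_and (i + t <= n)) [it /negP /negPn /eqP noF].
  have only_k m : m < r -> hits e t i m -> m = k.
    move=> mr him; have [x xF exm] := e_in_F mr.
    suff xj : x = j.
      by apply/succn_inj/e_inj; [exact: leqW mr | exact: leqW kr | rewrite exm ekj xj].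
    apply/eqP; apply: contraT => xj; move/setP: noF => /(_ x).
    by move: him; rewrite /hits exm ltnS !inE xj xF => ->.
  have [m mr him] := (vertex_cover_hitsE.1 covF) i it.
  by exists i; split=> //; rewrite -(only_k m mr him).
move=> [i [it _ only_k]] covFj.
have /set0Pn [x] := covFj i it; rewrite !inE => /andP [/andP [xj xF] ix].
have [m mr exm] := F_in_e xF.
have mk : m = k by apply: only_k => //; rewrite /hits exm ltnS.
by move: xj; rewrite -(inj_eq val_inj) -eqSS /= -exm mk ekj eqxx.
Qed.

Lemma in_C_gaps : t <= n -> in_C t F -> short_gaps e r t /\ long_double_gaps e r t.
Proof.
move=> tn; rewrite /in_C -/s -/r => -[r_gt0 [c1 [c2 [c3 [c4 [c5 c6]]]]]].
have e0 : e 0 = 0 by [].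
have link := nth_idx_seq; have e_r := e_last.
split=> -[|k] kr.
- by have := link 0 r_gt0; lia.
- have [kr1|rk1] := ltnP k.+1 r.
    by have := c3 k kr1; have := link k (ltnW kr1); have := link k.+1 kr1; lia.
  have Ekr : r = k.+1 by lia.
  by move: c6 e_r; rewrite Ekr /=; have := link k (_ : k < r); lia.
- have [r1|r1] := eqVneq r 1; last by have := c2 (_ : 1 < r); have := link 1 (_ : 1 < r); lia.
  by move: e_r; rewrite r1; lia.
- have [kr2|rk2] := ltnP k.+2 r.
    by have := c4 k kr2; have := link k (_ : k < r); have := link k.+2 kr2; lia.
  have Ekr : r = k.+2 by lia.
  by move: c5 e_r; rewrite Ekr /=; have := link k (_ : k < r); lia.
Qed.

Lemma gaps_in_C : t <= n -> short_gaps e r t -> long_double_gaps e r t -> in_C t F.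
Proof.
move=> tn short long; rewrite /in_C -/s -/r.
have e0 : e 0 = 0 by [].
have link := nth_idx_seq; have e_r := e_last.
have r_gt0 : 0 < r.
  rewrite lt0n; apply/eqP => r0; move: e_r (short 0 (leq0n _)); rewrite r0; lia.
split=> //; split.
  by have := link 0 r_gt0; have := e_incr (ltnSn 0) (leqW r_gt0); have := short 0 (leq0n _); lia.
split.
  by move=> r1; have := link 1 r1; have := long 0 r_gt0; lia.
split.
  move=> j jr; have := link j (ltnW jr); have := link j.+1 jr; have := short j.+1 (ltnW jr).
  by have := e_incr (ltnSn j.+1) (ltnW jr); lia.
split.
  move=> j jr; have := link j (_ : j < r); have := link j.+2 jr.
  by have := long j.+1 (_ : j.+1 < r); lia.
have [r' Er] : exists r', r = r'.+1 by exists r.-1; lia.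
split.
  move=> r1; have [r'' Er'] : exists r'', r' = r''.+1 by exists r'.-1; lia.
  have := long r' (_ : r' < r); have := link r'' (_ : r'' < r).
  by move: e_r; rewrite Er Er' /=; lia.
have := short r (leqnn r); have := e_incr (ltnSn r) (leqnn _); have := link r' (_ : r' < r).
by move: e_r; rewrite Er /=; lia.
Qed.

Lemma minimal_vertex_cover_gapsE : 0 < t ->
  minimal_vertex_cover t F <-> short_gaps e r t /\ long_double_gaps e r t.
Proof.
move=> t_gt0; rewrite minimal_vertex_coverD1.
have e0 : e 0 = 0 by [].
have short_gapsE := short_gapsE t e0 e_last e_incr.
split=> [[covF minF] | [short long]].
  split; first exact/short_gapsE/vertex_cover_hitsE.
  move=> k kr; have [j jF ekj] := e_in_F kr.
  exact/(long_double_gapE e0 e_last e_incr t_gt0 kr)/(not_vertex_coverD1E covF kr ekj jF)/minF.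
have covF : vertex_cover t F by apply/vertex_cover_hitsE/short_gapsE.
split=> // j jF; have [k kr ekj] := F_in_e jF.
exact/(not_vertex_coverD1E covF kr ekj jF)/(long_double_gapE e0 e_last e_incr t_gt0 kr)/long.
Qed.

Lemma in_in_C_minimal_vertex_cover : 0 < t -> t <= n ->
  in_C t F <-> minimal_vertex_cover t F.
Proof.
move=> t_gt0 tn; rewrite minimal_vertex_cover_gapsE //.
by split=> [/(in_C_gaps tn) | [] /(gaps_in_C tn)].
Qed.

End SortedCover.

Import GRing.Theory.
Local Open Scope ring_scope.

Section IdealGen.
Variable R : comNzRingType.

Lemma ideal_gen_ideal (G : R -> Prop) : is_ideal (ideal_gen G).
Proof.
split.
- by exists [::]; rewrite big_nil.
- move=> _ _ [s [sG ->]] [s' [s'G ->]]; exists (s ++ s'); rewrite big_cat.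
  by split=> // c; rewrite mem_cat => /orP [/sG|/s'G].
- move=> r _ [s [sG ->]]; exists [seq (r * c.1, c.2) | c <- s]; split.
    by move=> c /mapP [d /sG dG ->].
  by rewrite big_map mulr_sumr; apply: eq_bigr => c _; rewrite mulrA.
Qed.

Lemma ideal_gen_gen (G : R -> Prop) g : G g -> ideal_gen G g.
Proof.
move=> Gg; exists [:: (1, g)]; rewrite big_seq1 mul1r.
by split=> // c; rewrite inE => /eqP ->.
Qed.

Lemma ideal_gen_sub (G J : R -> Prop) :
  is_ideal J -> (forall g, G g -> J g) -> subideal (ideal_gen G) J.
Proof.
move=> [J0 JD JM] GJ _ [s [sG ->]]; elim: s sG => [|c s IH] sG; first by rewrite big_nil.
rewrite big_cons; apply: JD; first by apply/JM/GJ/sG; rewrite inE eqxx.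
by apply: IH => d ds; apply: sG; rewrite inE ds orbT.
Qed.

Lemma prime_ideal_prod (P : R -> Prop) (I : finType) (Q : pred I) (f : I -> R) :
  is_prime_ideal P -> P (\prod_(j | Q j) f j) -> exists2 j, Q j & P (f j).
Proof.
move=> [_ P1 Pmul]; elim/big_rec: _ => [/P1 //|i x Qi IH].
by move=> /Pmul [Pfi|/IH //]; exists i.
Qed.

End IdealGen.

Lemma mpoly_ring_ind (n : nat) (R : nzRingType) (P : {mpoly R[n]} -> Prop) :
  (forall c, P c%:MP) -> (forall i, P 'X_i) ->
  (forall p q, P p -> P q -> P (p + q)) -> (forall p q, P p -> P q -> P (p * q)) ->
  forall p, P p.
Proof.
move=> PC PX PD PM; elim/mpolyind => [|c m p _ _ Pp]; first by rewrite -mpolyC0.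
apply: (PD) => //; rewrite -mul_mpolyC mpolyXE_id; apply: (PM) => //.
elim/big_rec: _ => [|i q _ Pq]; first by rewrite -mpolyC1.
by apply: (PM) => //; elim: (m i) => [|k IH]; rewrite ?expr0 -?mpolyC1 // exprS; apply: (PM).
Qed.

Section KillVariables.
Variables (K : fieldType) (n : nat) (F : {set 'I_n}).

Definition kill_vars : {rmorphism {mpoly K[n]} -> {mpoly K[n]}} :=
  mmap (@mpolyC n K) (fun i => if i \in F then 0 else 'X_i).

Lemma kill_varsX i : kill_vars 'X_i = if i \in F then 0 else 'X_i.
Proof. by rewrite /kill_vars /= mmapX mmap1U. Qed.

Lemma pF_ideal : is_ideal (@pF K n F).
Proof. exact: ideal_gen_ideal. Qed.

Lemma pF_kill_varsE p : @pF K n F p <-> kill_vars p = 0.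
Proof.
have [pF0 pFD pFM] := pF_ideal; split.
  apply: (ideal_gen_sub (J := fun q => kill_vars q = 0)) => [|_ [i iF ->]];
    last by rewrite kill_varsX iF.
  split=> [|a b|c a]; first exact: rmorph0.
    by rewrite rmorphD => -> ->; rewrite addr0.
  by rewrite rmorphM => ->; rewrite mulr0.
move=> p0; suff : @pF K n F (p - kill_vars p) by rewrite p0 subr0.
elim/mpoly_ring_ind: p {p0} => [c|i|a b pa pb|a b pa pb].
- by rewrite /kill_vars /= mmapC subrr.
- rewrite kill_varsX; case: ifP => iF; last by rewrite subrr.
  by rewrite subr0; apply: ideal_gen_gen; exists i.
- by rewrite rmorphD opprD addrACA; apply: pFD.
have -> : a * b - kill_vars (a * b) = (a - kill_vars a) * b + kill_vars a * (b - kill_vars b).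
  by rewrite rmorphM mulrBl mulrBr addrA subrK.
by apply: pFD; [rewrite mulrC|]; apply: pFM.
Qed.

Lemma pF_prime : is_prime_ideal (@pF K n F).
Proof.
split; first exact: pF_ideal.
  by rewrite pF_kill_varsE rmorph1; apply/eqP; exact: oner_neq0.
move=> a b; rewrite !pF_kill_varsE rmorphM => /eqP; rewrite mulf_eq0.
by case/orP => /eqP; [left|right].
Qed.

Lemma pF_X i : @pF K n F 'X_i <-> i \in F.
Proof.
rewrite pF_kill_varsE kill_varsX; case: ifP => // _; split=> // X0.
by have := mcoeffXU K i i; rewrite X0 mcoeff0 eqxx => /eqP; rewrite eq_sym oner_eq0.
Qed.

End KillVariables.

Section MinimalPrimes.
Variables (K : fieldType) (n t : nat).

Lemma It_Ln_sub_pF (F : {set 'I_n}) :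
  vertex_cover t F -> subideal (@It_Ln K n t) (@pF K n F).
Proof.
move=> covF; apply: ideal_gen_sub => [|_ [i [it ->]]]; first exact: pF_ideal.
have /set0Pn [j] := covF i it; rewrite !inE => /andP [jF ij].
have [_ _ pFM] := pF_ideal K F.
by rewrite /path_gen (bigD1 j) //= mulrC; apply/pFM/pF_X.
Qed.

Lemma prime_over_It_Ln (P : {mpoly K[n]} -> Prop) :
  is_prime_ideal P -> subideal (@It_Ln K n t) P ->
  exists2 F, minimal_vertex_cover t F & subideal (@pF K n F) P.
Proof.
move=> primeP ItP.
pose G := [set i : 'I_n | excluded_middle_informative (P 'X_i)].
have covG : vertex_cover t G.
  move=> i it; have /(prime_ideal_prod primeP) [j ij Pj] :=
    ItP _ (ideal_gen_gen (ex_intro _ i (conj it erefl))).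
  by apply/set0Pn; exists j; rewrite !inE ij andbT; apply/sumboolP.
have [F FG minF] := exists_minimal_subcover covG; exists F => //.
case: primeP => idealP _ _; apply: ideal_gen_sub => // _ [i iF ->].
by have := subsetP FG i iF; rewrite inE => /sumboolP.
Qed.

Lemma minimal_prime_pF (F : {set 'I_n}) :
  minimal_vertex_cover t F -> minimal_prime_of (@It_Ln K n t) (@pF K n F).
Proof.
move=> [covF minF]; split; [exact: pF_prime | exact: It_Ln_sub_pF |].
move=> Q primeQ ItQ QF.
have [G [covG _] GQ] := prime_over_It_Ln primeQ ItQ.
have GF : G \subset F by apply/subsetP => i iG; apply/pF_X/QF/GQ/pF_X.
suff -> : F = G by [].
apply/eqP; rewrite eq_sym eqEproper GF /=; apply/negP => GF'.
exact: minF GF' covG.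
Qed.

Lemma minimal_prime_It_Ln (P : {mpoly K[n]} -> Prop) :
  minimal_prime_of (@It_Ln K n t) P ->
  exists2 F, minimal_vertex_cover t F & forall p, P p <-> @pF K n F p.
Proof.
move=> [primeP ItP minP]; have [F minF FP] := prime_over_It_Ln primeP ItP.
exists F => // p; split=> [|/FP //]; apply: minP => //; first exact: pF_prime.
by apply: It_Ln_sub_pF; case: minF.
Qed.

End MinimalPrimes.

Theorem theorem2p7 (K : fieldType) (n t : nat) (ht1 : (1 <= t)%N) (htn : (t <= n)%N) :
  (forall P : {mpoly K[n]} -> Prop,
     minimal_prime_of (@It_Ln K n t) P <->
     exists F : {set 'I_n}, @in_C n t F /\ (forall p, P p <-> @pF K n F p))
  /\ (forall F : {set 'I_n}, @in_C n t F <-> @minimal_vertex_cover n t F).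
Proof.
have in_C_minimal F := in_in_C_minimal_vertex_cover F ht1 htn.
split=> [P|F]; last exact: in_C_minimal.
split=> [/minimal_prime_It_Ln [F minF PF] | [F [CF PF]]].
  by exists F; split=> //; apply/in_C_minimal.
have -> : P = @pF K n F.
  by apply: functional_extensionality => p; apply: propositional_extensionality.
exact/minimal_prime_pF/in_C_minimal.
Qed.
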